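(* Let $\mathcal{A}=\{H_1,\dots,H_m\}$ be an arrangement of hyperplanes in $\mathbb{P}^n$ and let $P_1,\dots,P_m\in\mathrm{End}(\mathbb{C}^r)$ satisfy $\sum_{j=1}^m P_j=0$ and $[P_j,P_X]=0$ for all $j$ and all edges $X$ with $\operatorname{codim}X=2$ and $X\subseteq H_j$, where $P_X=\sum_{X\subseteq H_j}P_j$. Suppose there is $H\in\mathcal{A}$ such that for every dense edge $X\subseteq H$, no eigenvalue of $P_X$ lies in $\mathbb{Z}$. Then there exist integers $k_1,\dots,k_m$ with $\sum_j k_j=0$ such that the collection $(P_1+k_1\mathbb{I}_r,\dots,P_m+k_m\mathbb{I}_r)$ has the property that for every dense edge $X$ of $\mathcal{A}$, no eigenvalue of $\sum_{X\subseteq H_j}(P_j+k_j\mathbb{I}_r)$ lies in $\mathbb{Z}_{\geq 0}$.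
   Context: $\mathbb{I}_r$ is the $r\times r$ identity matrix. An edge is a nonempty intersection of hyperplanes of $\mathcal{A}$; an edge $X$ is dense if the subarrangement of hyperplanes containing $X$ is irreducible, i.e. cannot be partitioned into two nonempty sets which, after a linear change of coordinates, are defined by linear forms in disjoint sets of coordinates (each hyperplane is a dense edge). *)

(* Field: any numClosedFieldType C (e.g. the complex numbers). *)
From HB Require Import structures.
From mathcomp Require Import all_boot all_order all_algebra.
From mathcomp Require Import boolp.
Set Implicit Arguments.
Unset Strict Implicit.
Unset Printing Implicit Defensive.
Import Order.TTheory GRing.Theory Num.Theory.
Local Open Scope ring_scope.

Section Arrangement.
Variables (C : numClosedFieldType) (n m : nat).
(* Hyperplane H_j in P^n is the zero locus of the nonzero linear form f j on C^(n+1). *)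
Variable f : 'I_m -> 'rV[C]_n.+1.

Definition on_hyp (j : 'I_m) (v : 'cV[C]_n.+1) : Prop := f j *m v = 0.

Definition is_arrangement : Prop :=
  (forall j, f j != 0) /\
  (forall i j : 'I_m, i != j -> ~ (forall v, on_hyp i v <-> on_hyp j v)).

Definition in_inter (S : {set 'I_m}) (v : 'cV[C]_n.+1) : Prop :=
  forall i, i \in S -> on_hyp i v.

(* X_S is an edge: a nonempty (in P^n) intersection of (at least one) hyperplanes *)
Definition is_edge (S : {set 'I_m}) : Prop :=
  S != set0 /\ exists v, v != 0 /\ in_inter S v.

Definition contained (S : {set 'I_m}) (j : 'I_m) : Prop :=
  forall v, v != 0 -> in_inter S v -> on_hyp j v.

(* codimension of X_S in P^n = rank of the system of linear forms defining it *)
Definition codim (S : {set 'I_m}) : nat :=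
  \rank (\matrix_(i < m, k < n.+1) (if i \in S then f i 0 k else 0)).

(* the subarrangement {H_j : X_S \subseteq H_j} is reducible: it splits into two
   nonempty parts which, after a linear change of coordinates g, are defined by
   linear forms in disjoint sets of coordinates (I and its complement) *)
Definition reducible (S : {set 'I_m}) : Prop :=
  exists B : {set 'I_m},
    (exists j, j \in B) /\
    (exists j, contained S j /\ j \notin B) /\
    (forall j, j \in B -> contained S j) /\
    exists (g : 'M[C]_n.+1) (I : {set 'I_n.+1}),
      g \in unitmx /\
      (forall j, j \in B -> forall k, k \notin I -> (f j *m g) 0 k = 0) /\
      (forall j, contained S j -> j \notin B -> forall k, k \in I -> (f j *m g) 0 k = 0).

Definition dense (S : {set 'I_m}) : Prop := is_edge S /\ ~ reducible S.

Definition PX (r : nat) (P : 'I_m -> 'M[C]_r) (S : {set 'I_m}) : 'M[C]_r :=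
  \sum_(j < m | `[< contained S j >]) P j.

End Arrangement.

From mathcomp Require Import all_boot all_order all_algebra.
From mathcomp Require Import boolp zify.
Import Order.TTheory GRing.Theory Num.Theory.
Local Open Scope ring_scope.

(* Choose N beyond every nonnegative integer eigenvalue of every P_X (there
   are finitely many edges, each P_X has finitely many eigenvalues), shift
   the residue at H by (m-1)N and every other residue by -N.  For a dense
   edge X in H the total shift of P_X is an integer, so by hypothesis no
   integer becomes an eigenvalue; for X not in H the total shift is at most
   -N, so a nonnegative integer eigenvalue of the shifted P_X would come from
   an integer eigenvalue >= N of P_X. *)

Lemma poly_roots_eventually_avoid (R : idomainType) (a : nat -> R)
    (p : {poly R}) :
  injective a -> p != 0 -> exists N, forall w, (N <= w)%N -> ~~ root p (a w).
Proof.
move=> a_inj; have [s] := ubnP (size p); elim: s p => // s IHs p le_p_s p_neq0.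
have [[w0 root_w0]|no_root] := pselect (exists w, root p (a w)); last first.
  by exists 0%N => w _; apply/negP => root_w; apply: no_root; exists w.
have [q def_p] := factor_theorem p (a w0) root_w0.
have q_neq0 : q != 0 by apply: contraNneq p_neq0 => q0; rewrite def_p q0 mul0r.
have lt_q_s : (size q < s)%N.
  by move: le_p_s; rewrite def_p size_mul ?polyXsubC_eq0 // size_XsubC addn2.
have [N avoid_q] := IHs q lt_q_s q_neq0.
exists (maxn N w0.+1) => w; rewrite geq_max => /andP[le_N_w lt_w0_w].
by rewrite def_p rootM negb_or avoid_q // root_XsubC (inj_eq a_inj) gtn_eqF.
Qed.

Lemma int_eigenvalues_bounded {F : numFieldType} {T : finType} {r : nat}
    (A : T -> 'M[F]_r) :
  exists N : nat, forall t (z : int), N%:Z <= z -> ~~ eigenvalue (A t) z%:~R.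
Proof.
have natr_inj : injective (fun w : nat => w%:R : F).
  by move=> u v /eqP; rewrite eqr_nat => /eqP.
have /fin_all_exists[N avoid] : forall t, exists N,
    forall w, (N <= w)%N -> ~~ root (char_poly (A t)) w%:R.
  by move=> t; exact: poly_roots_eventually_avoid natr_inj
    (monic_neq0 (char_poly_monic (A t))).
exists (\max_t N t) => t [w|//]; rewrite lez_nat => le_N_w.
by rewrite eigenvalue_root_char avoid // (leq_trans (leq_bigmax t)).
Qed.

Lemma eigenvalue_add_scalar (F : fieldType) (r : nat) (A : 'M[F]_r) (c a : F) :
  eigenvalue (A + c%:M) a = eigenvalue A (a - c).
Proof. by rewrite /eigenvalue /eigenspace raddfB /= opprB addrA. Qed.

Definition shift_away {I : finType} (h : I) (N : int) (j : I) : int :=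
  if j == h then N *+ #|I|.-1 else - N.

Lemma sum_shift_away {I : finType} (h : I) (N : int) :
  \sum_j shift_away h N j = 0.
Proof.
rewrite (bigD1 h) //= (eq_bigr (fun=> - N)) => [|j /negbTE nhj]; last first.
  by rewrite /shift_away nhj.
by rewrite /shift_away eqxx sumr_const cardC1 mulNrn subrr.
Qed.

Lemma sum_shift_away_le {I : finType} (h : I) (N : int) (A : pred I) (j0 : I) :
  0 <= N -> A j0 -> ~~ A h -> \sum_(j | A j) shift_away h N j <= - N.
Proof.
move=> N_ge0 A_j0 notA_h.
rewrite (eq_bigr (fun=> - N)) => [|j A_j]; last first.
  by rewrite /shift_away; case: eqP A_j notA_h => // -> ->.
rewrite (bigD1 j0) //= gerDl sumr_le0 // => j _.
by rewrite oppr_le0.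
Qed.

Lemma PX_add_int_scalar (C : numClosedFieldType) (n m r : nat)
    (f : 'I_m -> 'rV[C]_n.+1) (P : 'I_m -> 'M[C]_r) (k : 'I_m -> int)
    (S : {set 'I_m}) :
  PX f (fun j => P j + ((k j)%:~R)%:M) S =
  PX f P S + ((\sum_(j < m | `[< contained f S j >]) k j)%:~R)%:M.
Proof. by rewrite /PX big_split /= mulrz_sumr raddf_sum. Qed.

Lemma contained_mem (C : numClosedFieldType) (n m : nat)
    (f : 'I_m -> 'rV[C]_n.+1) (S : {set 'I_m}) (j : 'I_m) :
  j \in S -> contained f S j.
Proof. by move=> jS v _; apply. Qed.

Theorem proposition4p1 (C : numClosedFieldType) (n m r : nat)
    (f : 'I_m -> 'rV[C]_n.+1) (P : 'I_m -> 'M[C]_r) :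
  is_arrangement f ->
  \sum_(j < m) P j = 0 ->
  (forall (j : 'I_m) (S : {set 'I_m}),
      is_edge f S -> codim f S = 2%N -> contained f S j ->
      P j *m PX f P S = PX f P S *m P j) ->
  (exists h : 'I_m, forall S : {set 'I_m},
      dense f S -> contained f S h ->
      forall z : int, ~~ eigenvalue (PX f P S) (z%:~R)) ->
  exists k : 'I_m -> int,
    \sum_(j < m) k j = 0 /\
    forall S : {set 'I_m}, dense f S ->
      forall z : nat,
        ~~ eigenvalue (PX f (fun j => P j + ((k j)%:~R)%:M) S) (z%:R).
Proof.
move=> _ _ _ [h PX_h_nonint].
have [N PX_bounded] := int_eigenvalues_bounded (PX f P).
exists (shift_away h N%:Z); split; first exact: sum_shift_away.
move=> S dense_S z.
rewrite PX_add_int_scalar eigenvalue_add_scalar pmulrn -intrB.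
have [[/set0Pn[j0 j0S] _] _] := dense_S.
have [contained_h|not_contained_h] := pselect (contained f S h).
  exact: PX_h_nonint.
have shift_le : \sum_(j < m | `[< contained f S j >]) shift_away h N%:Z j <= - N%:Z.
  apply: (sum_shift_away_le _ _ _ j0) => //.
  - exact/asboolP/contained_mem.
  - exact/asboolPn.
by apply: PX_bounded; lia.
Qed.
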